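(* Let $\mathcal G$ be an undirected connected graph with $n\ge 2$ nodes and $m$ edges, with incidence matrix $D=[D_\tau\ D_c]$, spanning-tree incidence matrix $D_\tau$, matrix $R=[I_{n-1}\ T_\tau^c]$, edge-weight matrix $W\succ 0$ (diagonal) and time-scale matrix $E\succ 0$ (diagonal), all as described in the context. Then the matrix $-L_{e,s}^\tau R W R^T\in\mathbb R^{(n-1)\times(n-1)}$, where $L_{e,s}^\tau=D_\tau^T E^{-1}D_\tau$, is diagonalizable.
   Context: Let $\mathcal G$ be an undirected, connected graph without self-loops, with node set $\{1,\dots,n\}$ ($n\ge2$) and edge set $\mathcal E$, $m=|\mathcal E|$. Give each edge an arbitrary orientation; the incidence matrix $D\in\mathbb R^{n\times m}$ has $D_{il}=1$ if node $i$ is the initial node of edge $l$, $-1$ if it is the terminal node, and $0$ otherwise. Fix a spanning tree $\mathcal G_\tau$ of $\mathcal G$ and order the edges so that the first $n-1$ are the tree edges; write $D=[D_\tau\ D_c]$ with $D_\tau\in\mathbb R^{n\times(n-1)}$ (incidence matrix of the tree) and $D_c$ the incidence matrix of the remaining (co-tree) edges. Set $T_\tau^c=(D_\tau^TD_\tau)^{-1}D_\tau^TD_c$ and $R=[I_{n-1}\ T_\tau^c]\in\mathbb R^{(n-1)\times m}$ (so $D=D_\tau R$). Let $W=\mathrm{diag}(w_1,\dots,w_m)$ with all $w_l>0$ (edge weights) and $E=\mathrm{diag}(\epsilon_1,\dots,\epsilon_n)$ with all $\epsilon_i>0$ (node time scales). The time-scaled edge Laplacian of the tree is $L_{e,s}^\tau=D_\tau^TE^{-1}D_\tau$.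 *)

From mathcomp Require Import all_boot all_order all_algebra.
Set Implicit Arguments. Unset Strict Implicit. Unset Printing Implicit Defensive.
Import Order.TTheory GRing.Theory Num.Theory.
Local Open Scope ring_scope.

(* An oriented graph on nodes 'I_n with edges 'I_m: edge l goes from
   its initial node [tl l] to its terminal node [hd l]. *)

Definition incidence (R : pzRingType) (n m : nat) (tl hd : 'I_m -> 'I_n)
  : 'M[R]_(n, m) :=
  \matrix_(i < n, l < m)
    (if i == tl l then 1 else if i == hd l then -1 else 0).

Definition no_self_loops (n m : nat) (tl hd : 'I_m -> 'I_n) : Prop :=
  forall l, tl l != hd l.

Definition no_parallel_edges (n m : nat) (tl hd : 'I_m -> 'I_n) : Prop :=
  forall l l', l != l' ->
    ~ ((tl l == tl l') && (hd l == hd l') ||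
       (tl l == hd l') && (hd l == tl l')).

Definition adj_on (n m : nat) (tl hd : 'I_m -> 'I_n) (P : pred 'I_m)
  : rel 'I_n :=
  fun x y => [exists l, P l &&
     (((tl l == x) && (hd l == y)) || ((tl l == y) && (hd l == x)))].

Definition connected_on (n m : nat) (tl hd : 'I_m -> 'I_n) (P : pred 'I_m)
  : Prop :=
  forall x y : 'I_n, connect (adj_on tl hd P) x y.

(* Acyclic edge set: removing any edge of P disconnects its endpoints
   within the subgraph P (i.e. no edge of P lies on a cycle of P). *)
Definition acyclic_on (n m : nat) (tl hd : 'I_m -> 'I_n) (P : pred 'I_m)
  : Prop :=
  forall l, P l ->
    ~~ connect (adj_on tl hd (predD1 P l)) (tl l) (hd l).

(* The edges in P form a spanning tree: connected, acyclic, touching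
   every node (spanning follows from connectedness on all of 'I_n). *)
Definition spanning_tree_on (n m : nat) (tl hd : 'I_m -> 'I_n) (P : pred 'I_m)
  : Prop :=
  connected_on tl hd P /\ acyclic_on tl hd P.

Definition first_edges (m n : nat) : pred 'I_m := fun l => (l < n.-1)%N.

Section Mats.
Variables (R : fieldType) (n k : nat).
Variables (tl hd : 'I_(n.-1 + k) -> 'I_n).

Definition Dmat : 'M[R]_(n, n.-1 + k) := incidence R tl hd.
Definition Dtau : 'M[R]_(n, n.-1) := lsubmx Dmat.
Definition Dc : 'M[R]_(n, k) := rsubmx Dmat.

Definition Ttc : 'M[R]_(n.-1, k) :=
  invmx (Dtau^T *m Dtau) *m Dtau^T *m Dc.

Definition Rmat : 'M[R]_(n.-1, n.-1 + k) := row_mx 1%:M Ttc.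

Definition Les_tau (eps : 'rV[R]_n) : 'M[R]_(n.-1) :=
  Dtau^T *m invmx (diag_mx eps) *m Dtau.
End Mats.

From mathcomp Require Import all_boot all_order all_algebra.
From mathcomp Require Import reals complex spectral.
Import Order.TTheory GRing.Theory Num.Theory.
Set Implicit Arguments. Unset Strict Implicit. Unset Printing Implicit Defensive.
Local Open Scope ring_scope.

(* Write W = S S^T with S = diag (sqrt w), so that -L R W R^T = A G with
   A = -L symmetric and G = Y Y^T, where Y = R S has full row rank because
   R = [I T].  Over C, Gram-Schmidt factors Y = T Q with Q having orthonormal
   rows and T invertible, so G = T T^* and conjugation by T^* turns A G into
   the Hermitian matrix T^* A T.  Hence all eigenvalues are real and
   the minimal polynomial of the real matrix A G is a product of distinct real
   linear factors. *)

Section Complexification.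
Variable R : rcfType.
Local Notation C := (complex R).
Local Notation toC := (real_complex R).
Local Open Scope sesquilinear_scope.

Lemma real_complex_real (x : R) : toC x \is Num.real.
Proof. by apply/complex_realP; exists x. Qed.

Lemma trmxC_map_real m n (X : 'M[R]_(m, n)) :
  (map_mx toC X)^t* = map_mx toC X^T.
Proof. by apply/matrixP => i j; rewrite !mxE conj_Creal ?real_complex_real. Qed.

Lemma diagonalizable_realC n (A : 'M[R]_n.+1) (P : 'M[C]_n.+1) (d : 'rV[C]_n.+1) :
  P \in unitmx -> d \is a realmx -> map_mx toC A = conjmx P (diag_mx d) ->
  diagonalizable A.
Proof.
move=> Pu dreal Ad; pose rs := undup [seq complex.Re (d 0 i) | i <- enum 'I_n.+1].
apply/diagonalizableP; exists rs; first exact: undup_uniq.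
rewrite -(dvdp_map toC) -mxminpoly_map Ad mxminpoly_uconj // mxminpoly_diag.
rewrite rmorph_prod (eq_bigr (fun r => 'X - (toC r)%:P)) => [|r _]; last first.
  exact: map_polyXsubC.
have toC_Re_d : map toC [seq complex.Re (d 0 i) | i <- enum 'I_n.+1] =
                [seq d 0 i | i <- enum 'I_n.+1].
  by rewrite -map_comp; apply: eq_map => i /=; rewrite RRe_real ?(mxOverP dreal).
rewrite -(big_map toC xpredT (fun c => 'X - c%:P)) -undup_map_inj ?toC_Re_d //.
exact: complexI.
Qed.

Lemma diagonalizable_conj_hermitian n (A : 'M[R]_n.+1) (V S : 'M[C]_n.+1) :
  V \in unitmx -> S \is hermsymmx -> map_mx toC A = conjmx V S ->
  diagonalizable A.
Proof.
move=> Vu Sherm AVS; have P_u := spectral_unit S.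
apply: (diagonalizable_realC (P := V *m invmx (spectralmx S))
                              (d := spectral_diag S)).
- by rewrite unitmx_mul Vu unitmx_inv P_u.
- exact: hermitian_spectral_diag_real.
- rewrite conjuMumx ?unitmx_inv // (conjVmx _ P_u) AVS.
  by rewrite -(orthomx_spectralP _) // hermitian_normalmx.
Qed.

Lemma gram_factor_complex n m (Y : 'M[R]_(n, m)) : row_free Y ->
  exists2 T : 'M[C]_n, T \in unitmx & map_mx toC (Y *m Y^T) = T *m T^t*.
Proof.
move=> Yfree; pose Yc := map_mx toC Y; pose Q := schmidt Yc.
have Qu : Q \is unitarymx.
  by apply/schmidt_unitarymx; rewrite -(eqP Yfree) rank_leq_col.
have [T YTQ] : exists T, Yc = T *m Q.
  by exists (Yc *m pinvmx Q); rewrite mulmxKpV ?schmidt_sub.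
exists T.
  have rank_Yc : \rank Yc = n by rewrite mxrank_map; apply/eqP.
  rewrite -row_free_unit /row_free eqn_leq rank_leq_row /=.
  by rewrite -[X in (X <= _)%N]rank_Yc YTQ mxrankM_maxl.
rewrite map_mxM -trmxC_map_real -/Yc YTQ trmx_mul map_mxM mulmxA.
by rewrite -(mulmxA T) (unitarymxP Qu) mulmx1.
Qed.

Lemma diagonalizable_sym_mul_gram n m (A : 'M[R]_n) (Y : 'M[R]_(n, m)) :
  A^T = A -> row_free Y -> diagonalizable (A *m (Y *m Y^T)).
Proof.
case: n => [|n] in A Y *.
  by rewrite [A *m _]flatmx0 => _ _; apply: diagonalizable0.
move=> Asym /gram_factor_complex[T Tu YYT]; pose Ac := map_mx toC A.
have Tcu : T^t* \in unitmx by rewrite map_unitmx unitmx_tr.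
apply: (diagonalizable_conj_hermitian (V := invmx (T^t*))
                                      (S := T^t* *m Ac *m T)).
- by rewrite unitmx_inv.
- apply/is_hermitianmxP; rewrite expr0 scale1r !trmx_mul !map_mxM trmxCK.
  by rewrite trmxC_map_real Asym mulmxA.
- by rewrite (conjVmx _ Tcu) map_mxM YYT !mulmxA (mulVmx Tcu) mul1mx.
Qed.

End Complexification.

Lemma trmx_Les_tau (R : fieldType) n k (tl hd : 'I_(n.-1 + k) -> 'I_n)
    (eps : 'rV[R]_n) :
  (Les_tau tl hd eps)^T = Les_tau tl hd eps.
Proof. by rewrite /Les_tau !trmx_mul trmxK trmx_inv tr_diag_mx mulmxA. Qed.

Lemma row_free_row_mx1 (R : fieldType) p q (B : 'M[R]_(p, q)) :
  row_free (row_mx 1%:M B).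
Proof.
have split1 : row_mx 1%:M B *m col_mx 1%:M 0 = 1%:M.
  by rewrite mul_row_col mul1mx mulmx0 addr0.
rewrite /row_free eqn_leq rank_leq_row /= -[X in (X <= _)%N](mxrank1 R p).
by rewrite -{1}split1 mxrankM_maxl.
Qed.

Lemma row_free_mul_diag (R : fieldType) p q (Y : 'M[R]_(p, q)) (d : 'rV[R]_q) :
  row_free Y -> (forall i, d 0 i != 0) -> row_free (Y *m diag_mx d).
Proof.
move=> Yfree d_neq0; rewrite /row_free mxrankMfree // row_free_unit unitmxE det_diag unitfE prodf_seq_neq0.
by apply/allP => i _; apply: d_neq0.
Qed.

Lemma diag_sqrt_gram (R : rcfType) n (w : 'rV[R]_n) : (forall i, 0 <= w 0 i) ->
  diag_mx (map_mx Num.sqrt w) *m (diag_mx (map_mx Num.sqrt w))^T = diag_mx w.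
Proof.
move=> w_ge0; rewrite tr_diag_mx mul_diag_mx; apply/matrixP => i j; rewrite !mxE.
have [->|_] := eqVneq i j; last by rewrite !mulr0n mulr0.
by rewrite !mulr1n -expr2 sqr_sqrtr.
Qed.

Theorem proposition1 (R : realType) (n k : nat) (Hn : (2 <= n)%N)
  (tl hd : 'I_(n.-1 + k) -> 'I_n)
  (Hloop : no_self_loops tl hd)
  (Hpar : no_parallel_edges tl hd)
  (Hconn : connected_on tl hd predT)
  (Htree : spanning_tree_on tl hd (@first_edges (n.-1 + k)%N n))
  (w : 'rV[R]_(n.-1 + k)) (Hw : forall l, 0 < w 0 l)
  (eps : 'rV[R]_n) (Heps : forall i, 0 < eps 0 i) :
  diagonalizable
    (- (Les_tau tl hd eps *m Rmat R tl hd *m diag_mx w *m (Rmat R tl hd)^T)).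
Proof.
set L := Les_tau tl hd eps; set Rm := Rmat R tl hd.
rewrite -(diag_sqrt_gram (fun l => ltW (Hw l))).
set s := map_mx Num.sqrt w; set Y := Rm *m diag_mx s.
have -> : - (L *m Rm *m (diag_mx s *m (diag_mx s)^T) *m Rm^T) = - L *m (Y *m Y^T).
  by rewrite /Y trmx_mul !mulmxA !mulNmx.
apply: (@diagonalizable_sym_mul_gram _ _ _ (- L) Y).
  by rewrite raddfN /= trmx_Les_tau.
apply: row_free_mul_diag; first exact: row_free_row_mx1.
by move=> l; rewrite mxE sqrtr_eq0 -ltNge Hw.
Qed.
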